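(* For every $\theta,\bar\theta\in\mathbb R^m$ there exists a stochastic policy $\mu_{\theta,\bar\theta}$ such that \[ T_{\alpha,\eta}(\theta)-T_{\alpha,\eta}(\bar\theta)=A^\eta_{\mu_{\theta,\bar\theta}}(\theta-\bar\theta). \] In particular, suppose $\theta^\star_\eta$ satisfies $\Phi^\top D(R+\gamma PV_{\theta^\star_\eta}-\Phi\theta^\star_\eta)-\eta\theta^\star_\eta=0$, $\theta_{k+1}=T_{\alpha,\eta}(\theta_k)$, and $x_k:=\theta_k-\theta^\star_\eta$. Then $x_{k+1}=A^\eta_{\mu_k}x_k$ for all $k\ge0$, where each $\mu_k$ is a stochastic policy depending measurably on $(\theta_k,\theta^\star_\eta)$.
   Context: Consider a finite discounted MDP with state space $\mathcal S=\{1,\dots,|\mathcal S|\}$, action space $\mathcal A=\{1,\dots,|\mathcal A|\}$, transition probabilities $P(s'\mid s,a)$, expected reward $R(s,a)$, and discount factor $\gamma\in(0,1)$. State-action vectors are ordered as $(1,1),(2,1),\dots,(|\mathcal S|,1),(1,2),\dots$. The matrix $P$ has rows $P(\cdot\mid s,a)$, and $R$ has entries $R(s,a)$. A stochastic policy is a map $\mu:\mathcal S\to\Delta_{|\mathcal A|}$. The matrix $\Pi^\mu\in\mathbb R^{|\mathcal S|\times|\mathcal S||\mathcal A|}$ has entry $\mu(a\mid s)$ at row $s$, column $(s,a)$, and zeros elsewhere. The feature matrix $\Phi\in\mathbb R^{|\mathcal S||\mathcal A|\times m}$ has full column rank and rows $\phi(s,a)^\top$. Define $V_\theta(s)=\max_a\phi(s,a)^\top\theta$.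 The distribution $d>0$ on $\mathcal S\times\mathcal A$ gives $D=\mathrm{diag}(d)$. The step size is $\alpha\in(0,1)$ and the regularization weight is $\eta\ge0$. Define $T_{\alpha,\eta}(\theta):=\theta+\alpha[\Phi^\top D(R+\gamma PV_\theta-\Phi\theta)-\eta\theta]$ and \[ A^\eta_\mu:=I-\alpha(\Phi^\top D\Phi+\eta I)+\alpha\gamma\Phi^\top DP\Pi^\mu\Phi. \] *)

From HB Require Import structures.
From mathcomp Require Import all_boot all_order all_algebra.
From mathcomp Require Import all_classical all_reals all_analysis.
Set Implicit Arguments. Unset Strict Implicit. Unset Printing Implicit Defensive.
Import Order.TTheory GRing.Theory Num.Theory.
Import numFieldNormedType.Exports.
Local Open Scope classical_set_scope.
Local Open Scope ring_scope.

Section MDP.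
Variables (R : realType) (nS nA m : nat).
(* States are 'I_nS, actions are 'I_nA.+1 (a nonempty action set).
   State-action pairs are indexed by 'I_(nA.+1 * nS), ordered
   (1,1),(2,1),...,(|S|,1),(1,2),... : the pair (s,a) has index a*|S| + s. *)
Definition sa (s : 'I_nS) (a : 'I_nA.+1) : 'I_(nA.+1 * nS) := mxvec_index a s.

(* P(.|s,a) are the rows of P : each row is a probability vector. *)
Definition row_stochastic (n k : nat) (M : 'M[R]_(n, k)) : Prop :=
  (forall i j, 0 <= M i j) /\ (forall i, \sum_j M i j = 1).

(* A stochastic policy mu : S -> Delta_|A|, stored as mu s a = mu(a|s). *)
Definition is_policy (mu : 'M[R]_(nS, nA.+1)) : Prop := row_stochastic mu.

Definition Pimat (mu : 'M[R]_(nS, nA.+1)) : 'M[R]_(nS, nA.+1 * nS) :=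
  \matrix_(s < nS, j < nA.+1 * nS)
     \sum_(a < nA.+1) (if j == sa s a then mu s a else 0).

Definition Vtheta (Phi : 'M[R]_(nA.+1 * nS, m)) (theta : 'cV[R]_m) : 'cV[R]_nS :=
  \col_(s < nS) \big[Num.max/(Phi *m theta) (sa s ord0) 0]_(a < nA.+1)
                   (Phi *m theta) (sa s a) 0.

Definition Dmat (d : 'cV[R]_(nA.+1 * nS)) : 'M[R]_(nA.+1 * nS) := diag_mx d^T.

Definition Gfun (Phi : 'M[R]_(nA.+1 * nS, m)) (P : 'M[R]_(nA.+1 * nS, nS))
    (Rw : 'cV[R]_(nA.+1 * nS)) (d : 'cV[R]_(nA.+1 * nS)) (gamma eta : R)
    (theta : 'cV[R]_m) : 'cV[R]_m :=
  Phi^T *m Dmat d *m (Rw + gamma *: (P *m Vtheta Phi theta) - Phi *m theta)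
  - eta *: theta.

Definition Top (Phi : 'M[R]_(nA.+1 * nS, m)) (P : 'M[R]_(nA.+1 * nS, nS))
    (Rw : 'cV[R]_(nA.+1 * nS)) (d : 'cV[R]_(nA.+1 * nS)) (gamma alpha eta : R)
    (theta : 'cV[R]_m) : 'cV[R]_m :=
  theta + alpha *: Gfun Phi P Rw d gamma eta theta.

Definition Amat (Phi : 'M[R]_(nA.+1 * nS, m)) (P : 'M[R]_(nA.+1 * nS, nS))
    (d : 'cV[R]_(nA.+1 * nS)) (gamma alpha eta : R)
    (mu : 'M[R]_(nS, nA.+1)) : 'M[R]_m :=
  1%:M - alpha *: (Phi^T *m Dmat d *m Phi + eta%:M)
  + (alpha * gamma) *: (Phi^T *m Dmat d *m P *m Pimat mu *m Phi).
End MDP.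

Definition borel_measurable_fun {T : topologicalType} {R : realType}
    (f : T -> R) : Prop :=
  forall U : set R, open U -> <<s [set V : set T | open V] >> (f @^-1` U).

From mathcomp Require Import all_boot all_order all_algebra.
From mathcomp Require Import all_classical all_reals all_analysis.
From mathcomp Require Import measurable_realfun ring.
Set Implicit Arguments. Unset Strict Implicit. Unset Printing Implicit Defensive.
Import Order.TTheory GRing.Theory Num.Theory.
Import numFieldNormedType.Exports.
Local Open Scope classical_set_scope.
Local Open Scope ring_scope.

(* Fix a state s and let f, g be the action values of theta and thetab, with
   maximisers i and j.  Then f j - g j <= max f - max g = f i - g j <= f i - g i,
   so V_theta(s) - V_thetab(s) is a convex combination of the differences of the
   action values at i and at j.  The policy putting these two weights on i and j
   gives V_theta - V_thetab = Pi^mu Phi (theta - thetab), and the identity for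
   T follows by linearity.  Taking the first maximisers and the ratio of the two
   gaps (with 0/0 = 0) makes mu a Borel function of (theta, thetab).  Along the
   iteration, T fixes theta_star. *)

Section first_argmax.
Variables (R : realFieldType) (n : nat).
Implicit Types (f g : 'I_n.+1 -> R) (a b i j : 'I_n.+1).

(* Ties are broken towards the smallest index, so the maximiser is unique. *)
Definition first_argmax f a : bool :=
  [forall b, (f b <= f a) && ((b < a)%N ==> (f b < f a))].

Lemma first_argmax_max f a b : first_argmax f a -> f b <= f a.
Proof. by move/forallP/(_ b)/andP => []. Qed.

Lemma first_argmax_uniq f a b : first_argmax f a -> first_argmax f b -> a = b.
Proof.
have first_lt a' b' : first_argmax f a' -> first_argmax f b' -> (a' < b')%N -> False.
  move=> ha hb lt; have /andP[_ /implyP/(_ lt)] := forallP hb a'.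
  by rewrite ltNge (first_argmax_max b' ha).
move=> ha hb; apply/val_inj.
by case: (ltngtP a b) => // lt; [case: (first_lt a b) | case: (first_lt b a)].
Qed.

Lemma first_argmax_exists f : exists a, first_argmax f a.
Proof.
have [a0 a0_max] : exists a0, forall b, f b <= f a0.
  have [a0 _ max_a0] := @arg_maxP _ _ _ ord0 predT f erefl.
  by exists a0 => b; exact: max_a0.
have ex_max : exists k, (k < n.+1)%N && (f (inord k) == f a0).
  by exists a0; rewrite ltn_ord inord_val eqxx.
case: (ex_minnP ex_max) => k /andP[lt_k /eqP fk] k_min.
exists (inord k); apply/forallP => b; rewrite fk a0_max //=.
apply/implyP => lt_bk; rewrite lt_neqAle a0_max // andbT.
apply: contraTN lt_bk => /eqP fb; rewrite inordK // -leqNgt.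
by apply: k_min; rewrite ltn_ord -fb inord_val eqxx.
Qed.

Lemma bigmax_first_argmax f a :
  first_argmax f a -> \big[Num.max/f ord0]_b f b = f a.
Proof.
move=> ha; apply/eqP; rewrite eq_le le_bigmax andbT.
by apply: bigmax_le => [|b _]; exact: first_argmax_max.
Qed.

Definition argmax_weight f a : R := (first_argmax f a)%:R.

Lemma sum_argmax_weight f a (F : 'I_n.+1 -> R) :
  first_argmax f a -> \sum_b argmax_weight f b * F b = F a.
Proof.
move=> ha; rewrite (bigD1 a) //= /argmax_weight ha mul1r big1 ?addr0 // => b ba.
have [hb|_] := boolP (first_argmax f b); last by rewrite mul0r.
by rewrite (first_argmax_uniq hb ha) eqxx in ba.
Qed.

Lemma sum_argmax_weight1 f : \sum_b argmax_weight f b = 1.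
Proof.
have [a ha] := first_argmax_exists f.
by rewrite -(sum_argmax_weight (fun=> 1) ha); apply: eq_bigr => b _; rewrite mulr1.
Qed.

(* A sum over the argmax weights rather than a ratio at chosen maximisers, so
   that measurability in [(f, g)] follows from closure properties. *)
Definition max_gap_weight f g : R :=
  \sum_i argmax_weight f i * \sum_j argmax_weight g j
                               * ((f i - f j) / ((g j - g i) + (f i - f j))).

Lemma max_gap_weightE f g i j : first_argmax f i -> first_argmax g j ->
  max_gap_weight f g = (f i - f j) / ((g j - g i) + (f i - f j)).
Proof.
move=> hi hj.
by rewrite /max_gap_weight (sum_argmax_weight _ hi) (sum_argmax_weight _ hj).
Qed.

(* For [u + v = 0] also [v = 0], and the last identity holds as [v / 0 = 0]. *)
Lemma convex_ratio (u v : R) : 0 <= u -> 0 <= v ->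
  [/\ 0 <= v / (u + v), v / (u + v) <= 1 & v / (u + v) * (u + v) = v].
Proof.
move=> u0 v0; have [uv0|uv_neq0] := eqVneq (u + v) 0.
  have -> : v = 0 by apply/eqP; rewrite eq_le v0 andbT -uv0 lerDr.
  by rewrite !mul0r; split; rewrite ?ler01.
have uv_gt0 : 0 < u + v by rewrite lt_def uv_neq0 addr_ge0.
by rewrite mulfVK // divr_ge0 ?ler_pdivrMr ?mul1r ?lerDr ?addr_ge0.
Qed.

Lemma max_gap_weightP f g i j : first_argmax f i -> first_argmax g j ->
  [/\ 0 <= max_gap_weight f g, max_gap_weight f g <= 1
     & max_gap_weight f g * ((g j - g i) + (f i - f j)) = f i - f j].
Proof.
move=> hi hj; rewrite (max_gap_weightE hi hj).
by apply: convex_ratio; rewrite subr_ge0 first_argmax_max.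
Qed.

Definition max_gap_policy f g a : R :=
  argmax_weight f a * max_gap_weight f g + argmax_weight g a * (1 - max_gap_weight f g).

Lemma max_gap_policy_ge0 f g a : 0 <= max_gap_policy f g a.
Proof.
have [i hi] := first_argmax_exists f; have [j hj] := first_argmax_exists g.
have [w0 w1 _] := max_gap_weightP hi hj.
by rewrite addr_ge0 // mulr_ge0 ?subr_ge0 ?ler0n.
Qed.

Lemma sum_max_gap_policy f g : \sum_a max_gap_policy f g a = 1.
Proof.
by rewrite big_split /= -!mulr_suml !sum_argmax_weight1 !mul1r addrC subrK.
Qed.

Lemma max_gap_policy_gap f g :
  \sum_a max_gap_policy f g a * (f a - g a)
  = \big[Num.max/f ord0]_a f a - \big[Num.max/g ord0]_a g a.
Proof.
have [i hi] := first_argmax_exists f; have [j hj] := first_argmax_exists g.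
rewrite (bigmax_first_argmax hi) (bigmax_first_argmax hj).
under eq_bigr do rewrite mulrDl mulrAC [_ * (1 - _) * _]mulrAC.
rewrite big_split /= -!mulr_suml (sum_argmax_weight _ hi) (sum_argmax_weight _ hj).
have [_ _ interpolates] := max_gap_weightP hi hj.
set w := max_gap_weight f g in interpolates *.
transitivity (w * ((g j - g i) + (f i - f j)) + (f j - g j)); first by ring.
by rewrite interpolates; ring.
Qed.

End first_argmax.

Lemma measurable_forall d (T : measurableType d) (I : finType) (F : I -> T -> bool) :
  (forall i, measurable_fun [set: T] (F i)) ->
  measurable_fun [set: T] (fun t => [forall i, F i t]).
Proof.
move=> mF; apply: (measurable_fun_bool true); rewrite setTI.
have -> : (fun t => [forall i, F i t]) @^-1` [set true]
          = \bigcap_(i in [set: I]) (F i @^-1` [set true]).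
  apply/seteqP; split=> [t /forallP Ft i _ | t Ft]; first exact: Ft.
  by apply/forallP => i; exact: Ft.
apply: fin_bigcap_measurable => [|i _]; first exact: finite_finset.
by rewrite -[X in measurable X]setTI; exact: mF.
Qed.

Lemma measurable_invr (R : realType) : measurable_fun [set: R] GRing.inv.
Proof.
rewrite -(setUv [set 0]); apply/measurable_funU => //; first exact: measurableC.
split; first exact: measurable_fun_set1.
apply: open_continuous_measurable_fun.
  exact/closed_openC/accessible_closed_set1/hausdorff_accessible/Rhausdorff.
by move=> x /set_mem/eqP x_neq0; exact: inv_continuous.
Qed.

Section borel_pairs.
Variables (R : realType) (m : nat).
Local Notation T := ('cV[R]_m * 'cV[R]_m)%type.
Local Notation borel := (g_sigma_algebraType [set V : set T | open V]).

Lemma continuous_borel_measurable (f : T -> R) :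
  continuous f -> measurable_fun [set: borel] (f : borel -> R).
Proof.
move=> /continuousP cf; apply: (measurability _ (RGenOpens.measurableE R)).
move=> _ [_ [a [b ->]] <-]; rewrite setTI; apply: sub_sigma_algebra.
exact/cf/interval_open.
Qed.

Lemma measurable_borel_measurable_fun (f : borel -> R) :
  measurable_fun [set: borel] f -> borel_measurable_fun (f : T -> R).
Proof.
move=> mf U oU; rewrite -[_ @^-1` _]setTI; exact: mf (open_measurable oU).
Qed.

Lemma measurable_mulmx_entry k l (A : 'M[R]_(k, l)) (x : T -> 'cV[R]_l) i :
  continuous x -> measurable_fun [set: borel] (fun t : borel => (A *m x t) i 0).
Proof.
move=> cx.
have -> : (fun t : borel => (A *m x t) i 0) = (fun t => \sum_j A i j * x t j 0).
  by apply/funext => t; rewrite mxE.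
apply: measurable_sum => j; apply: measurable_funM; first exact: measurable_cst.
apply: continuous_borel_measurable => t.
apply: (@continuous_comp _ _ _ x (fun M : 'cV[R]_l => M j 0) t (cx t)).
exact: coord_continuous.
Qed.

End borel_pairs.

Section measurable_max_gap_policy.
Context d (T : measurableType d) (R : realType) (n : nat).
Variables F G : 'I_n.+1 -> T -> R.
Hypotheses (mF : forall i, measurable_fun [set: T] (F i))
           (mG : forall i, measurable_fun [set: T] (G i)).

Lemma measurable_argmax_weight (H : 'I_n.+1 -> T -> R) a :
  (forall i, measurable_fun [set: T] (H i)) ->
  measurable_fun [set: T] (fun t => argmax_weight (H^~ t) a).
Proof.
move=> mH.
have -> : (fun t => argmax_weight (H^~ t) a)
          = (fun t => if first_argmax (H^~ t) a then 1 else 0).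
  by apply/funext => t; rewrite /argmax_weight; case: first_argmax.
apply: measurable_fun_ifT; [|exact: measurable_cst..].
apply: measurable_forall => b; apply: measurable_and.
  exact: measurable_fun_ler.
by case: (b < a)%N; [exact: measurable_fun_ltr | exact: measurable_cst].
Qed.

Lemma measurable_max_gap_weight :
  measurable_fun [set: T] (fun t => max_gap_weight (F^~ t) (G^~ t)).
Proof.
apply: measurable_sum => i; apply: measurable_funM.
  exact: measurable_argmax_weight.
apply: measurable_sum => j; apply: measurable_funM.
  exact: measurable_argmax_weight.
apply: measurable_funM; first exact: measurable_funB.
apply: measurableT_comp (@measurable_invr R) _.
by apply: measurable_funD; apply: measurable_funB.
Qed.

Lemma measurable_max_gap_policy a :
  measurable_fun [set: T] (fun t => max_gap_policy (F^~ t) (G^~ t) a).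
Proof.
apply: measurable_funD; apply: measurable_funM;
  try exact: measurable_argmax_weight; first exact: measurable_max_gap_weight.
exact: measurable_funB (measurable_cst _) measurable_max_gap_weight.
Qed.

End measurable_max_gap_policy.

Section max_gap_selection.
Variables (R : realType) (nS nA m : nat) (Phi : 'M[R]_(nA.+1 * nS, m)).

Definition qvalues (th : 'cV[R]_m) (s : 'I_nS) (a : 'I_nA.+1) : R :=
  (Phi *m th) (sa s a) 0.

Definition max_gap_selection (p : 'cV[R]_m * 'cV[R]_m) : 'M[R]_(nS, nA.+1) :=
  \matrix_(s, a) max_gap_policy (qvalues p.1 s) (qvalues p.2 s) a.

Lemma VthetaE th s :
  Vtheta Phi th s 0 = \big[Num.max/qvalues th s ord0]_a qvalues th s a.
Proof. by rewrite mxE. Qed.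

Lemma max_gap_selection_policy p : is_policy (max_gap_selection p).
Proof.
split=> [s a|s]; first by rewrite mxE max_gap_policy_ge0.
by under eq_bigr do rewrite mxE; exact: sum_max_gap_policy.
Qed.

Lemma Pimat_mulmx (mu : 'M[R]_(nS, nA.+1)) (x : 'cV[R]_(nA.+1 * nS)) s :
  (Pimat mu *m x) s 0 = \sum_a mu s a * x (sa s a) 0.
Proof.
rewrite mxE; under eq_bigr do rewrite mxE mulr_suml.
rewrite exchange_big /=; apply: eq_bigr => a _.
rewrite (bigD1 (sa s a)) //= eqxx big1 ?addr0 // => j /negbTE ->.
by rewrite mul0r.
Qed.

Lemma Vtheta_sub th thb :
  Vtheta Phi th - Vtheta Phi thb
  = Pimat (max_gap_selection (th, thb)) *m (Phi *m (th - thb)).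
Proof.
apply/matrixP => s j.
rewrite (ord1 j) Pimat_mulmx mxE [X in _ + X]mxE !VthetaE.
rewrite -(max_gap_policy_gap (qvalues th s) (qvalues thb s)).
by apply: eq_bigr => a _; rewrite mxE mulmxBr /qvalues !mxE.
Qed.

Lemma measurable_max_gap_selection s a :
  borel_measurable_fun (fun p : 'cV[R]_m * 'cV[R]_m => max_gap_selection p s a).
Proof.
pose borel := g_sigma_algebraType [set V : set ('cV[R]_m * 'cV[R]_m) | open V].
apply: (@measurable_borel_measurable_fun R m
          (fun p : borel => max_gap_selection p s a)).
have -> : (fun p : borel => max_gap_selection p s a)
          = (fun p => max_gap_policy (qvalues p.1 s) (qvalues p.2 s) a).
  by apply/funext => p; rewrite mxE.
apply: (@measurable_max_gap_policy _ borel R nA (fun b p => qvalues p.1 s b)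
                                               (fun b p => qvalues p.2 s b)) => b.
- by apply: measurable_mulmx_entry => p; exact: cvg_fst.
- by apply: measurable_mulmx_entry => p; exact: cvg_snd.
Qed.

End max_gap_selection.

Lemma Top_sub (R : realType) (nS nA m : nat) (P : 'M[R]_(nA.+1 * nS, nS))
    (Rw : 'cV[R]_(nA.+1 * nS)) (Phi : 'M[R]_(nA.+1 * nS, m))
    (d : 'cV[R]_(nA.+1 * nS)) (gamma alpha eta : R) mu th thb :
  Vtheta Phi th - Vtheta Phi thb = Pimat mu *m (Phi *m (th - thb)) ->
  Top Phi P Rw d gamma alpha eta th - Top Phi P Rw d gamma alpha eta thb
  = Amat Phi P d gamma alpha eta mu *m (th - thb).
Proof.
move=> V_sub; set K := Phi^T *m Dmat d.
have GfunE t : Gfun Phi P Rw d gamma eta t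
    = K *m Rw + gamma *: (K *m (P *m Vtheta Phi t)) - K *m (Phi *m t) - eta *: t.
  by rewrite /Gfun mulmxBr mulmxDr -scalemxAr.
have AmatE : Amat Phi P d gamma alpha eta mu *m (th - thb)
    = (th - thb)
      - alpha *: (K *m (Phi *m th) - K *m (Phi *m thb) + eta *: (th - thb))
      + (alpha * gamma) *: (K *m (P *m Vtheta Phi th) - K *m (P *m Vtheta Phi thb)).
  rewrite /Amat mulmxDl mulmxBl mul1mx -!scalemxAl mulmxDl mul_scalar_mx.
  by rewrite -!mulmxA -V_sub !mulmxBr.
rewrite AmatE /Top !GfunE.
move: (K *m Rw) (K *m (Phi *m th)) (K *m (Phi *m thb)) => a b1 b2.
move: (K *m (P *m Vtheta Phi th)) (K *m (P *m Vtheta Phi thb)) => c1 c2.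
by apply/matrixP => i j; rewrite !mxE; ring.
Qed.

Theorem proposition4 (R : realType) (nS nA m : nat)
  (P : 'M[R]_(nA.+1 * nS, nS)) (Rw : 'cV[R]_(nA.+1 * nS))
  (gamma : R) (Phi : 'M[R]_(nA.+1 * nS, m)) (d : 'cV[R]_(nA.+1 * nS))
  (alpha eta : R) :
  row_stochastic P ->
  0 < gamma < 1 ->
  \rank Phi = m ->
  (forall i, 0 < d i 0) -> \sum_i d i 0 = 1 ->
  0 < alpha < 1 ->
  0 <= eta ->
  (* first claim *)
  (forall theta thetab : 'cV[R]_m,
     exists mu : 'M[R]_(nS, nA.+1),
       is_policy mu /\
       Top Phi P Rw d gamma alpha eta theta - Top Phi P Rw d gamma alpha eta thetab
       = Amat Phi P d gamma alpha eta mu *m (theta - thetab))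
  /\
  (* "in particular": a measurable policy selection along the iteration *)
  (exists M : 'cV[R]_m * 'cV[R]_m -> 'M[R]_(nS, nA.+1),
     (forall p, is_policy (M p)) /\
     (forall s a, borel_measurable_fun (fun p => M p s a)) /\
     forall (thstar : 'cV[R]_m) (th : nat -> 'cV[R]_m),
       Gfun Phi P Rw d gamma eta thstar = 0 ->
       (forall k, th k.+1 = Top Phi P Rw d gamma alpha eta (th k)) ->
       forall k, th k.+1 - thstar
                 = Amat Phi P d gamma alpha eta (M (th k, thstar)) *m (th k - thstar)).
Proof.
move=> _ _ _ _ _ _ _.
have Top_sub_selection th thb :
    Top Phi P Rw d gamma alpha eta th - Top Phi P Rw d gamma alpha eta thb
    = Amat Phi P d gamma alpha eta (max_gap_selection Phi (th, thb)) *m (th - thb).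
  exact/Top_sub/Vtheta_sub.
split=> [th thb|].
  exists (max_gap_selection Phi (th, thb)).
  by split; [exact: max_gap_selection_policy | exact: Top_sub_selection].
exists (max_gap_selection Phi); split; first exact: max_gap_selection_policy.
split; first exact: measurable_max_gap_selection.
move=> thstar th Gfun_star th_succ k.
have Top_star : Top Phi P Rw d gamma alpha eta thstar = thstar.
  by rewrite /Top Gfun_star scaler0 addr0.
by rewrite th_succ -{1}Top_star Top_sub_selection.
Qed.
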